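(* Let $n\ge2$, let $P_1$ be the probability that a given node is isolated in $H^*_{nmF}$ and $P_2$ the probability that two given distinct nodes are both isolated in $H^*_{nmF}$. For each $k$ let $X_k$ be $f^{(k)}$-distributed and let $\phi_1(x)=1-\frac{x1(x\ge2)}{n}$. Assume $\mathbb{E}\phi_1(X_k)>0$ for all $k$. Then \[ \log\frac{P_2}{P_1^2}\ \le\ \sum_{k=1}^m\frac{\operatorname{Var}(\phi_1(X_k))}{(\mathbb{E}\phi_1(X_k))^2}. \]
   Context: Shotgun random hypergraph: given integers $n,m\ge1$ and probability distributions $f^{(1)},\dots,f^{(m)}$ on $\{0,\dots,n\}$, write $F=f^{(1)}\times\cdots\times f^{(m)}$. $H^*_{nmF}$ is the random hypergraph with node set $\{1,\dots,n\}$ and hyperedge set $\{V_1,\dots,V_m\}$, where $V_1,\dots,V_m\subset\{1,\dots,n\}$ are mutually independent and $\mathbb{P}(V_k=A)=f^{(k)}(|A|)\binom{n}{|A|}^{-1}$. A node is isolated if it is not contained in any hyperedge of size at least two. *)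

From HB Require Import structures.
From mathcomp Require Import all_boot all_order all_algebra.
From mathcomp Require Import reals exp.
Set Implicit Arguments. Unset Strict Implicit. Unset Printing Implicit Defensive.
Import Order.TTheory GRing.Theory Num.Theory.
Local Open Scope ring_scope.

Section Shotgun.
Variables (R : realType) (n m : nat) (f : 'I_m -> 'I_n.+1 -> R).

(* An outcome of the shotgun hypergraph: the hyperedges V_1..V_m (indexed by 'I_m)
   over the node set 'I_n. *)
Definition hyperedges := {ffun 'I_m -> {set 'I_n}}.

(* P(V_1,...,V_m) = prod_k f^(k)(|V_k|) / binom(n, |V_k|)   (independence) *)
Definition shotgun_weight (V : hyperedges) : R :=
  \prod_(k < m) (f k (inord #|V k|) / ('C(n, #|V k|))%:R).

Definition shotgun_prob (E : pred hyperedges) : R :=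
  \sum_(V : hyperedges | E V) shotgun_weight V.

Definition isolated (V : hyperedges) (i : 'I_n) : bool :=
  [forall k, (i \in V k) ==> (#|V k| < 2)%N].

Definition phi1 (x : nat) : R := 1 - (if (2 <= x)%N then x%:R else 0) / n%:R.

Definition Ephi1 (k : 'I_m) : R := \sum_(s < n.+1) f k s * phi1 s.
Definition Varphi1 (k : 'I_m) : R :=
  \sum_(s < n.+1) f k s * (phi1 s - Ephi1 k) ^+ 2.

End Shotgun.

Definition is_distribution (R : realType) (n : nat) (g : 'I_n.+1 -> R) : Prop :=
  (forall s, 0 <= g s) /\ \sum_(s < n.+1) g s = 1.

From HB Require Import structures.
From mathcomp Require Import all_boot all_order all_algebra.
From mathcomp Require Import reals exp.
From mathcomp Require Import ring zify.
Set Implicit Arguments. Unset Strict Implicit. Unset Printing Implicit Defensive.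
Import Order.TTheory GRing.Theory Num.Theory.
Local Open Scope ring_scope.

(* Isolation of a node is a conjunction of conditions on the single hyperedges,
   which are independent, so P1 and P2 factor over the hyperedges.  Conditionally
   on |V_k| = s >= 2, V_k is uniform among the s-subsets, so it misses a given
   node with probability C(n-1,s)/C(n,s) = 1 - s/n = phi1(s) and two given nodes
   with probability C(n-2,s)/C(n,s) <= phi1(s)^2; for s < 2 both are 1.  Hence
   P1 = prod_k E phi1(X_k) and P2 <= prod_k E phi1(X_k)^2 = prod_k (Var + E^2),
   and log (1 + x) <= x gives the bound. *)

Definition edge_isolates (T : finType) (S : {set T}) (x : T) : bool :=
  (x \in S) ==> (#|S| < 2)%N.

Lemma edge_isolatesE (T : finType) (S : {set T}) (x : T) :
  edge_isolates S x = [disjoint S & [set x]] || (#|S| < 2)%N.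
Proof. by rewrite /edge_isolates disjoint_sym disjoints1 implybE. Qed.

Lemma edge_isolates2E (T : finType) (S : {set T}) (x y : T) :
  edge_isolates S x && edge_isolates S y =
  [disjoint S & [set x; y]] || (#|S| < 2)%N.
Proof.
have -> : [disjoint S & [set x; y]] = [disjoint S & [set x]] && [disjoint S & [set y]].
  by rewrite ![[disjoint S & _]]disjoint_sym !disjoints1 disjoints_subset
             subUset !sub1set !inE.
by rewrite !edge_isolatesE -orb_andl.
Qed.

Lemma card_isolating_draws (T : finType) (A : {set T}) (P : pred {set T}) s :
  (forall S, P S = [disjoint S & A] || (#|S| < 2)%N) ->
  #|[set S | P S & #|S| == s]| = 'C(if (s < 2)%N then #|T| else #|T| - #|A|, s)%N.
Proof.
move=> PE; case: ltnP => [s_lt2|s_ge2].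
  rewrite -card_draws; apply: eq_card => S; rewrite !inE PE.
  by case: (#|S| =P s) => [->|_]; rewrite ?andbF // s_lt2 orbT.
have cardCA : #|~: A| = (#|T| - #|A|)%N by rewrite -(cardsC A) addKn.
rewrite -cardCA -cards_draws; apply: eq_card => S; rewrite !inE PE disjoints_subset.
by case: (#|S| =P s) => [->|_]; rewrite ?andbT ?andbF // ltnNge s_ge2 orbF.
Qed.

Lemma bin_subn1 (F : numFieldType) (N s : nat) : (0 < N)%N ->
  'C(N - 1, s)%:R = (N - s)%:R / N%:R * 'C(N, s)%:R :> F.
Proof.
move=> N_gt0; have N0 : N%:R != 0 :> F by rewrite pnatr_eq0 -lt0n.
by rewrite mulrAC -natrM -mul_bin_down subn1 natrM mulrAC divff // mul1r.
Qed.

Lemma bin_subn2_le (F : realFieldType) (N s : nat) : (1 < N)%N ->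
  'C(N - 2, s)%:R <= ((N - s)%:R / N%:R) ^+ 2 * 'C(N, s)%:R :> F.
Proof.
move=> N_gt1; have N1_gt0 : (0 < N - 1)%N by lia.
have -> : (N - 2 = N - 1 - 1)%N by lia.
rewrite (bin_subn1 F _ N1_gt0) (bin_subn1 F _ (ltnW N_gt1)) mulrA expr2.
apply: ler_wpM2r; first exact: ler0n.
apply: ler_wpM2r; first by rewrite divr_ge0 ?ler0n.
rewrite ler_pdivrMr ?ltr0n // mulrAC ler_pdivlMr ?ltr0n ?(ltnW N_gt1) //.
rewrite -!natrM ler_nat; nia.
Qed.

Lemma phi1_small (R : realType) (n x : nat) : (x < 2)%N -> phi1 R n x = 1.
Proof. by move=> x_lt2; rewrite /phi1 leqNgt x_lt2 mul0r subr0. Qed.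

Lemma phi1_large (R : realType) (n x : nat) : (0 < n)%N -> (2 <= x <= n)%N ->
  phi1 R n x = (n - x)%:R / n%:R.
Proof.
move=> n_gt0 /andP[x_ge2 x_le_n]; have n0 : n%:R != 0 :> R by rewrite pnatr_eq0 -lt0n.
by rewrite /phi1 x_ge2 natrB // mulrBl divff.
Qed.

Lemma sum_sqr_dev (R : comRingType) (N : nat) (g h : 'I_N -> R) :
  \sum_(s < N) g s = 1 ->
  \sum_(s < N) g s * (h s - \sum_(t < N) g t * h t) ^+ 2 =
  \sum_(s < N) g s * h s ^+ 2 - (\sum_(s < N) g s * h s) ^+ 2.
Proof.
move=> g1; set E := \sum_(t < N) g t * h t.
transitivity (\sum_(s < N) (g s * h s ^+ 2 - (E *+ 2) * (g s * h s) + E ^+ 2 * g s)).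
  by apply: eq_bigr => s _; ring.
by rewrite big_split sumrB /= -!mulr_sumr g1 -/E; ring.
Qed.

Lemma forall_andb (T : finType) (P Q : pred T) :
  [forall x, P x && Q x] = [forall x, P x] && [forall x, Q x].
Proof.
apply/forallP/andP => [PQ | [/forallP PT /forallP QT] x]; last by rewrite PT QT.
by split; apply/forallP => x; case/andP: (PQ x).
Qed.

Lemma ln_prod_le_sum (R : realType) (I : finType) (x y : I -> R) :
  0 < \prod_i x i -> (forall i, 0 <= x i <= 1 + y i) ->
  ln (\prod_i x i) <= \sum_i y i.
Proof.
move=> x_gt0 x_le; rewrite -[X in _ <= X]expRK ler_ln ?posrE ?expR_gt0 //.
rewrite expR_sum; apply: ler_prod => i _.
by case/andP: (x_le i) => -> /le_trans; apply; exact: expR_ge1Dx.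
Qed.

Section ShotgunEdges.
Variables (R : realType) (n m : nat) (f : 'I_m -> 'I_n.+1 -> R).

Definition edge_prob (k : 'I_m) (P : pred {set 'I_n}) : R :=
  \sum_(S : {set 'I_n} | P S) f k (inord #|S|) / 'C(n, #|S|)%:R.

Lemma shotgun_prob_forall (P : 'I_m -> pred {set 'I_n}) :
  shotgun_prob f (fun V => [forall k, P k (V k)]) = \prod_(k < m) edge_prob k (P k).
Proof.
rewrite /edge_prob; under eq_bigr do rewrite big_mkcond /=.
rewrite bigA_distr_bigA /shotgun_prob big_mkcond /=; apply: eq_bigr => V _.
case: (boolP [forall k, P k (V k)]) => [/forallP PV | /forallPn[k PVk]].
  by apply: eq_bigr => k _; rewrite PV.
by rewrite (bigD1 k) //= (negbTE PVk) mul0r.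
Qed.

Lemma edge_prob_by_card k P : edge_prob k P =
  \sum_(s < n.+1) f k s * (#|[set S | P S & #|S| == s]|%:R / 'C(n, s)%:R).
Proof.
rewrite /edge_prob (partition_big (fun S : {set 'I_n} => inord #|S| : 'I_n.+1) xpredT) //=.
apply: eq_bigr => s _; rewrite mulrCA mulr_natl -sumr_const.
have card_lt (S : {set 'I_n}) : (#|S| < n.+1)%N.
  by rewrite ltnS -[n in (_ <= n)%N]card_ord max_card.
apply: eq_big => [S | S /andP[_ /eqP <-]]; last by rewrite inordK.
by rewrite inE -val_eqE /= inordK.
Qed.

Lemma natr_bin_ord_neq0 (s : 'I_n.+1) : 'C(n, s)%:R != 0 :> R.
Proof. by rewrite pnatr_eq0 -lt0n bin_gt0 -ltnS. Qed.

Lemma edge_prob_isolates k (i : 'I_n) :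
  edge_prob k (fun S => edge_isolates S i) = Ephi1 f k.
Proof.
have n_gt0 : (0 < n)%N by apply: leq_ltn_trans (ltn_ord i).
rewrite edge_prob_by_card /Ephi1; apply: eq_bigr => s _; congr (_ * _).
rewrite (@card_isolating_draws _ [set i]) => [|S]; last exact: edge_isolatesE.
rewrite card_ord cards1; case: ltnP => [s_lt2 | s_ge2].
  by rewrite phi1_small // divff // natr_bin_ord_neq0.
have s_le : (s <= n)%N by rewrite -ltnS.
rewrite phi1_large ?s_ge2 ?s_le //.
by rewrite bin_subn1 // mulfK // natr_bin_ord_neq0.
Qed.

Lemma edge_prob_isolates2_le k (i j : 'I_n) : (forall s, 0 <= f k s) -> i != j ->
  edge_prob k (fun S => edge_isolates S i && edge_isolates S j) <=
  \sum_(s < n.+1) f k s * phi1 R n s ^+ 2.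
Proof.
move=> fk_ge0 ij; have n_gt1 : (1 < n)%N.
  by have := max_card [set i; j]; rewrite cards2 ij card_ord.
rewrite edge_prob_by_card; apply: ler_sum => s _; apply: ler_wpM2l => //.
rewrite (@card_isolating_draws _ [set i; j]) => [|S]; last exact: edge_isolates2E.
rewrite card_ord cards2 ij; case: ltnP => [s_lt2 | s_ge2].
  by rewrite phi1_small // expr1n divff // natr_bin_ord_neq0.
have s_le : (s <= n)%N by rewrite -ltnS.
rewrite phi1_large ?s_ge2 ?s_le ?(ltnW n_gt1) // ler_pdivrMr ?lt0r ?natr_bin_ord_neq0 ?ler0n //.
exact: bin_subn2_le.
Qed.

End ShotgunEdges.

Theorem mainTheorem11 (R : realType) (n m : nat) (f : 'I_m -> 'I_n.+1 -> R)
  (i j : 'I_n) :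
  (2 <= n)%N -> (1 <= m)%N ->
  (forall k, is_distribution (f k)) ->
  i != j ->
  (forall k, 0 < Ephi1 f k) ->
  let P1 := shotgun_prob f (fun V => isolated V i) in
  let P2 := shotgun_prob f (fun V => isolated V i && isolated V j) in
  P2 = 0 \/
  ln (P2 / P1 ^+ 2) <= \sum_(k < m) Varphi1 f k / (Ephi1 f k) ^+ 2.
Proof.
move=> _ _ f_distr ij E_gt0 P1 P2.
pose q k := edge_prob f k (fun S => edge_isolates S i && edge_isolates S j).
have P1E : P1 = \prod_(k < m) Ephi1 f k.
  rewrite /P1 (shotgun_prob_forall f (fun _ S => edge_isolates S i)).
  by apply: eq_bigr => k _; exact: edge_prob_isolates.
have P2E : P2 = \prod_(k < m) q k.
  rewrite -shotgun_prob_forall /P2 /shotgun_prob.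
  by apply: eq_bigl => V; rewrite forall_andb.
have q_le k : q k <= Varphi1 f k + Ephi1 f k ^+ 2.
  have [f_ge0 f_sum1] := f_distr k.
  by rewrite /Varphi1 sum_sqr_dev // subrK; exact: edge_prob_isolates2_le.
case: (eqVneq P2 0) => [-> | P2_neq0]; [by left | right].
have q_ge0 k : 0 <= q k.
  by apply: sumr_ge0 => S _; have [f_ge0 _] := f_distr k; rewrite divr_ge0 ?ler0n.
have P12E : P2 / P1 ^+ 2 = \prod_(k < m) (q k / Ephi1 f k ^+ 2).
  by rewrite P1E P2E prodf_div prodrXl.
have P1_gt0 : 0 < P1 by rewrite P1E prodr_gt0.
have P2_gt0 : 0 < P2 by rewrite lt_def P2_neq0 P2E prodr_ge0 // => k _; exact: q_ge0.
rewrite P12E; apply: ln_prod_le_sum => [|k]; first by rewrite -P12E divr_gt0 ?exprn_gt0.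
rewrite divr_ge0 ?sqr_ge0 //= ler_pdivrMr ?exprn_gt0 // mulrDl mul1r.
by rewrite mulfVK ?gt_eqF ?exprn_gt0 // addrC; exact: q_le.
Qed.
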